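(* There is a constant $C>0$ such that for every $\phi\in\mathbb{R}$ and all distinct integers $n_1,n_2$, the arcs $I_{n_1,\phi}$ and $I_{n_2,\phi}$ of $\mathbb{R}/\mathbb{Z}$ satisfy $$d(I_{n_1,\phi},I_{n_2,\phi})>C\min(|I_{n_1,\phi}|,|I_{n_2,\phi}|).$$
   Context: $\tau=\frac{1+\sqrt5}{2}$; $w(x)=\frac1\pi\left(\tan^{-1}(x+1)-\tan^{-1}(x)\right)$. For real $x$, $x\bmod\tau\in\mathbb{R}/\tau\mathbb{Z}$ and $x\bmod1\in\mathbb{R}/\mathbb{Z}$ denote images. For $n\in\mathbb{Z}$ and $\phi\in\mathbb{R}$ let $a_{n,\phi}=\sum w(k-\phi)$, the sum over all integers $k$ with $k\bmod\tau$ in the half-open arc $[0,n\bmod\tau)$ of $\mathbb{R}/\tau\mathbb{Z}$ (from $0$ to $n\bmod\tau$ in the positive direction), and let $I_{n,\phi}\subset\mathbb{R}/\mathbb{Z}$ be the open arc from $a_{n,\phi}\bmod1$ to $(a_{n,\phi}+w(n-\phi))\bmod1$, of length $|I_{n,\phi}|=w(n-\phi)$. Here $d$ denotes the distance between subsets of the circle $\mathbb{R}/\mathbb{Z}$ (infimum of arc-length distances between their points). The constant $C$ is independent of all variables. *)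

From Stdlib Require Import Reals Lra ZArith.
From Coquelicot Require Import Coquelicot.
Open Scope R_scope.

Definition tau : R := (1 + sqrt 5) / 2.

Definition w (x : R) : R := (atan (x + 1) - atan x) / PI.

(* floor of a real (Int_part x = up x - 1 = floor x) *)
Definition rfloor (x : R) : Z := Int_part x.

Definition modtau (x : R) : R := x - tau * IZR (rfloor (x / tau)).

(* summand of a_{n,phi} at integer k: nonzero iff k mod tau lies in the
   half-open arc [0, n mod tau) of R/tau Z (both reps taken in [0,tau)) *)
Definition a_term (n : Z) (phi : R) (k : Z) : R :=
  if Rlt_dec (modtau (IZR k)) (modtau (IZR n)) then w (IZR k - phi) else 0.

(* a_{n,phi} = sum over all integers k (split into k >= 0 and k < 0) of the
   terms with k mod tau in [0, n mod tau); terms are positive and summable *)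
Definition a_coef (n : Z) (phi : R) : R :=
  Series (fun m : nat => a_term n phi (Z.of_nat m))
  + Series (fun m : nat => a_term n phi (- (Z.of_nat m + 1))%Z).

Definition arc_len (n : Z) (phi : R) : R := w (IZR n - phi).

Definition frac_part (t : R) : R := t - IZR (rfloor t).
Definition circ_dist (x y : R) : R :=
  Rmin (frac_part (x - y)) (1 - frac_part (x - y)).

(* I_{n,phi}: open arc from a mod 1 to (a + |I|) mod 1; a real x represents a
   point of I_{n,phi} iff x = t mod 1 for some t in (a, a + |I|) *)
Definition in_I (n : Z) (phi : R) (x : R) : Prop :=
  exists t : R, a_coef n phi < t < a_coef n phi + arc_len n phi /\
                exists m : Z, x = t + IZR m.

Definition set_dist (A B : R -> Prop) : Rbar :=
  Glb_Rbar (fun d => exists x y, A x /\ B y /\ d = circ_dist x y).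

(* Order n1, n2 so that n1 mod tau < n2 mod tau.  Then a_{n2} - a_{n1} is the total weight
   w(k - phi) of the integers k with k mod tau in [n1 mod tau, n2 mod tau), and, the weights of
   all integers summing to at most 1, the gap on the other side of the circle is at least the
   weight of the remaining integers other than n2.  Each gap therefore exceeds the weight of an
   integer k with |k - n1| <= 19 |n2 - n1| lying in the corresponding range mod tau.  Such a k
   exists: since |d^2 - d q - q^2| >= 1 for d <> 0, the residue d mod tau is at least
   1 / (6 |d|), and the even convergents f - p tau = tau^(-2i) of the golden ratio provide an
   integer 0 <= f <= 18 |d| whose residue lies in (0, d mod tau).  Finally w(x) is comparable
   to 1 / (1 + x^2), so the weight of such a k is a fixed fraction of min(|I_{n1}|, |I_{n2}|). *)

From Pilot Require Import Defs.
From Stdlib Require Import Reals ZArith Lra Lia.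
From Coquelicot Require Import Coquelicot.
Open Scope R_scope.

Section NonnegSeries.

Variable a : nat -> R.
Hypothesis a_ge0 : forall n, 0 <= a n.

Lemma sum_n_le_succ n : sum_n a n <= sum_n a (S n).
Proof. rewrite sum_Sn; unfold plus; simpl; specialize (a_ge0 (S n)); lra. Qed.

Lemma sum_n_ge_term i N : (i <= N)%nat -> a i <= sum_n a N.
Proof.
  induction 1 as [|N _ IH].
  - destruct i as [|i]; [rewrite sum_O; lra|].
    rewrite sum_Sn, sum_n_Reals; unfold plus; simpl.
    pose proof (cond_pos_sum a i a_ge0); lra.
  - pose proof (sum_n_le_succ N); lra.
Qed.

Lemma sum_n_ge_two i j : (i < j)%nat -> a i + a j <= sum_n a j.
Proof.
  intros Hij; destruct j as [|j]; [lia|].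
  rewrite sum_Sn; unfold plus; simpl.
  pose proof (sum_n_ge_term i j ltac:(lia)); lra.
Qed.

Lemma sum_n_le_Series N : ex_series a -> sum_n a N <= Series a.
Proof.
  intros Ha; rewrite sum_n_Reals.
  apply sum_incr; [apply is_series_Reals, Series_correct, Ha | exact a_ge0].
Qed.

Lemma Series_ge_term i : ex_series a -> a i <= Series a.
Proof. intros Ha; eapply Rle_trans; [apply (sum_n_ge_term i i) | apply sum_n_le_Series]; auto. Qed.

Lemma Series_ge0 : ex_series a -> 0 <= Series a.
Proof. intros Ha; eapply Rle_trans; [apply (a_ge0 0) | apply Series_ge_term, Ha]. Qed.

Lemma Series_ge_two i j : ex_series a -> i <> j -> a i + a j <= Series a.
Proof.
  intros Ha Hij.
  destruct (proj1 (Nat.lt_gt_cases i j) Hij) as [Hlt | Hgt].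
  - eapply Rle_trans; [apply (sum_n_ge_two i j Hlt) | apply sum_n_le_Series, Ha].
  - rewrite Rplus_comm.
    eapply Rle_trans; [apply (sum_n_ge_two j i Hgt) | apply sum_n_le_Series, Ha].
Qed.

Lemma ex_series_bounded B :
  (forall n, sum_n a n <= B) -> ex_series a /\ Series a <= B.
Proof.
  intros HB.
  destruct (ex_finite_lim_seq_incr (sum_n a) B sum_n_le_succ HB) as [l Hl].
  assert (Hs : is_series a l) by exact Hl.
  split; [exists l; exact Hs|].
  rewrite (is_series_unique a l Hs).
  exact (is_lim_seq_le (sum_n a) (fun _ => B) l B HB Hl (is_lim_seq_const B)).
Qed.

End NonnegSeries.

(* The splitting of [a_coef]: [a_coef n phi] is convertible to [Zseries (a_term n phi)]. *)
Definition Zseq_pos (h : Z -> R) (m : nat) : R := h (Z.of_nat m).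
Definition Zseq_neg (h : Z -> R) (m : nat) : R := h (- (Z.of_nat m + 1))%Z.
Definition ex_Zseries (h : Z -> R) : Prop := ex_series (Zseq_pos h) /\ ex_series (Zseq_neg h).
Definition Zseries (h : Z -> R) : R := Series (Zseq_pos h) + Series (Zseq_neg h).

Lemma Zseq_pos_to_nat h k : (0 <= k)%Z -> Zseq_pos h (Z.to_nat k) = h k.
Proof. intros Hk; unfold Zseq_pos; now rewrite Z2Nat.id. Qed.

Lemma Zseq_neg_to_nat h k : (k < 0)%Z -> Zseq_neg h (Z.to_nat (- k - 1)) = h k.
Proof. intros Hk; unfold Zseq_neg; rewrite Z2Nat.id by lia; f_equal; lia. Qed.

Lemma ex_Zseries_le h g :
  (forall k, 0 <= h k <= g k) -> ex_Zseries g -> ex_Zseries h.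
Proof.
  intros Hhg [Gp Gn]; split;
    [apply (ex_series_le (Zseq_pos h) (Zseq_pos g)) |
     apply (ex_series_le (Zseq_neg h) (Zseq_neg g))]; auto;
    intro m; unfold Zseq_pos, Zseq_neg; rewrite Rabs_pos_eq; apply Hhg.
Qed.

Lemma Zseries_minus h g :
  ex_Zseries h -> ex_Zseries g -> Zseries (fun k => h k - g k) = Zseries h - Zseries g.
Proof.
  intros [Hp Hn] [Gp Gn]; unfold Zseries.
  change (Zseq_pos (fun k => h k - g k)) with (fun m => Zseq_pos h m - Zseq_pos g m).
  change (Zseq_neg (fun k => h k - g k)) with (fun m => Zseq_neg h m - Zseq_neg g m).
  rewrite (Series_minus _ _ Hp Gp), (Series_minus _ _ Hn Gn); ring.
Qed.

Lemma Zseries_ge_two h k k' :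
  (forall k, 0 <= h k) -> ex_Zseries h -> k <> k' -> h k + h k' <= Zseries h.
Proof.
  intros Hh [Hp Hn] Hk; unfold Zseries.
  assert (Pp : forall m, 0 <= Zseq_pos h m) by (intro; apply Hh).
  assert (Pn : forall m, 0 <= Zseq_neg h m) by (intro; apply Hh).
  pose proof (Series_ge0 _ Pp Hp); pose proof (Series_ge0 _ Pn Hn).
  assert (Tp : forall j, (0 <= j)%Z -> h j <= Series (Zseq_pos h)).
  { intros j Hj; rewrite <- Zseq_pos_to_nat by exact Hj; apply Series_ge_term; auto. }
  assert (Tn : forall j, (j < 0)%Z -> h j <= Series (Zseq_neg h)).
  { intros j Hj; rewrite <- Zseq_neg_to_nat by exact Hj; apply Series_ge_term; auto. }
  destruct (Z_lt_le_dec k 0), (Z_lt_le_dec k' 0).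
  - rewrite <- (Zseq_neg_to_nat h k), <- (Zseq_neg_to_nat h k') by assumption.
    pose proof (Series_ge_two _ Pn (Z.to_nat (- k - 1)) (Z.to_nat (- k' - 1)) Hn ltac:(lia)); lra.
  - pose proof (Tn k ltac:(lia)); pose proof (Tp k' ltac:(lia)); lra.
  - pose proof (Tp k ltac:(lia)); pose proof (Tn k' ltac:(lia)); lra.
  - rewrite <- (Zseq_pos_to_nat h k), <- (Zseq_pos_to_nat h k') by assumption.
    pose proof (Series_ge_two _ Pp (Z.to_nat k) (Z.to_nat k') Hp ltac:(lia)); lra.
Qed.

Lemma w_pos x : 0 < w x.
Proof.
  unfold w; pose proof (atan_increasing x (x + 1) ltac:(lra)); pose proof PI_RGT_0.
  apply Rdiv_lt_0_compat; lra.
Qed.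

Lemma w_mvt x : exists c, x < c < x + 1 /\ w x = / (PI * (1 + c ^ 2)).
Proof.
  destruct (MVT_cor2 atan (fun c => / (1 + c ^ 2)) x (x + 1) ltac:(lra)) as [c [Hc Hcx]].
  { intros; apply derivable_pt_lim_atan. }
  exists c; split; [exact Hcx|].
  unfold w; rewrite Hc; pose proof PI_RGT_0; assert (0 < 1 + c ^ 2) by nra.
  field; lra.
Qed.

Lemma w_ge x : / (3 * PI * (1 + x ^ 2)) <= w x.
Proof.
  destruct (w_mvt x) as [c [Hc ->]]; pose proof PI_RGT_0.
  assert (1 + c ^ 2 <= 3 * (1 + x ^ 2)) by (pose proof (pow2_ge_0 (2 * x - c)); nra).
  apply Rinv_le_contravar; nra.
Qed.

Lemma w_le x : w x <= 3 / (PI * (1 + x ^ 2)).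
Proof.
  destruct (w_mvt x) as [c [Hc ->]]; pose proof PI_RGT_0.
  assert (1 + x ^ 2 <= 3 * (1 + c ^ 2)) by (pose proof (pow2_ge_0 (2 * c - x)); nra).
  replace (3 / (PI * (1 + x ^ 2))) with (/ (PI * (1 + x ^ 2) / 3)) by (field; nra).
  apply Rinv_le_contravar; nra.
Qed.

(* [13689 = 9 * 39 ^ 2]: [w_ge] and [w_le] pin [w x] to within a factor 9 of
   [1 / (PI (1 + x ^ 2))], and [w_min_compare] enlarges arguments by a factor up to 39. *)
Definition sep_const : R := / 13689.

Lemma sep_const_pos : 0 < sep_const.
Proof. unfold sep_const; lra. Qed.

Lemma w_compare y y' : Rabs y <= 39 * Rabs y' -> sep_const * w y' <= w y.
Proof.
  intros Hy; pose proof PI_RGT_0.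
  assert (y ^ 2 <= 1521 * y' ^ 2).
  { rewrite <- (pow2_abs y), <- (pow2_abs y'); pose proof (Rabs_pos y); nra. }
  pose proof (w_ge y); pose proof (w_le y').
  assert (sep_const * (3 / (PI * (1 + y' ^ 2))) <= / (3 * PI * (1 + y ^ 2))).
  { unfold sep_const.
    replace (/ 13689 * (3 / (PI * (1 + y' ^ 2)))) with (/ (3 * PI * (1521 * (1 + y' ^ 2))))
      by (field; nra).
    apply Rinv_le_contravar; nra. }
  pose proof sep_const_pos; nra.
Qed.

Lemma w_min_compare y1 y2 y :
  Rabs (y - y1) <= 19 * Rabs (y2 - y1) -> sep_const * Rmin (w y1) (w y2) <= w y.
Proof.
  intros Hy; pose proof sep_const_pos.
  assert (Rabs y <= 20 * Rabs y1 + 19 * Rabs y2).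
  { pose proof (Rabs_triang (y - y1) y1); pose proof (Rabs_triang y2 (- y1)).
    rewrite Rabs_Ropp in *; replace (y - y1 + y1) with y in * by ring.
    replace (y2 + - y1) with (y2 - y1) in * by ring; lra. }
  destruct (Rle_dec (Rabs y1) (Rabs y2)).
  - pose proof (w_compare y y2 ltac:(lra)); pose proof (Rmin_r (w y1) (w y2)); nra.
  - pose proof (w_compare y y1 ltac:(lra)); pose proof (Rmin_l (w y1) (w y2)); nra.
Qed.

Definition weight (phi : R) (k : Z) : R := w (IZR k - phi).

Lemma sum_n_weight_pos phi N :
  sum_n (Zseq_pos (weight phi)) N = (atan (INR N + 1 - phi) - atan (- phi)) / PI.
Proof.
  pose proof PI_RGT_0.
  induction N as [|N IH].
  - rewrite sum_O; unfold Zseq_pos, weight, w; simpl; f_equal; f_equal; f_equal; ring.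
  - rewrite sum_Sn, IH; unfold Zseq_pos, weight, w.
    rewrite <- INR_IZR_INZ, S_INR; unfold plus; simpl.
    replace (INR N + 1 - phi + 1) with (INR N + 1 + 1 - phi) by ring.
    field; lra.
Qed.

Lemma sum_n_weight_neg phi N :
  sum_n (Zseq_neg (weight phi)) N = (atan (- phi) - atan (- (INR N + 1) - phi)) / PI.
Proof.
  pose proof PI_RGT_0.
  induction N as [|N IH].
  - rewrite sum_O; unfold Zseq_neg, weight, w; simpl; f_equal; f_equal; f_equal; ring.
  - rewrite sum_Sn, IH; unfold Zseq_neg, weight, w.
    rewrite opp_IZR, plus_IZR, <- INR_IZR_INZ, S_INR; unfold plus; simpl.
    replace (- (INR N + 1 + 1) - phi + 1) with (- (INR N + 1) - phi) by ring.
    field; lra.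
Qed.

Lemma Zseries_weight_le1 phi : ex_Zseries (weight phi) /\ Zseries (weight phi) <= 1.
Proof.
  pose proof PI_RGT_0; pose proof (atan_bound (- phi)).
  assert (Hw : forall m, 0 <= Zseq_pos (weight phi) m /\ 0 <= Zseq_neg (weight phi) m)
    by (intro; split; apply Rlt_le, w_pos).
  assert (Hdiv : forall u v, u <= v -> u / PI <= v / PI)
    by (intros; apply Rmult_le_compat_r; [apply Rlt_le, Rinv_0_lt_compat|]; lra).
  destruct (ex_series_bounded (Zseq_pos (weight phi)) (fun m => proj1 (Hw m))
              ((PI / 2 - atan (- phi)) / PI)) as [Ep Sp].
  { intro N; rewrite sum_n_weight_pos; apply Hdiv.
    pose proof (atan_bound (INR N + 1 - phi)); lra. }
  destruct (ex_series_bounded (Zseq_neg (weight phi)) (fun m => proj2 (Hw m))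
              ((atan (- phi) + PI / 2) / PI)) as [En Sn].
  { intro N; rewrite sum_n_weight_neg; apply Hdiv.
    pose proof (atan_bound (- (INR N + 1) - phi)); lra. }
  split; [split; assumption|]; unfold Zseries.
  replace 1 with ((PI / 2 - atan (- phi)) / PI + (atan (- phi) + PI / 2) / PI) by (field; lra).
  lra.
Qed.

Lemma tau_sq : tau * tau = tau + 1.
Proof.
  unfold tau; pose proof (sqrt_sqrt 5 ltac:(lra)); nra.
Qed.

Lemma tau_bounds : 1.6 < tau < 1.7.
Proof.
  unfold tau; pose proof (sqrt_pos 5); pose proof (sqrt_sqrt 5 ltac:(lra)); nra.
Qed.

(* Infinite descent: [d ^ 2 - d q - q ^ 2] is odd unless [d] and [q] are both even. *)
Lemma golden_norm_eq0 (d q : Z) : (d * d - d * q - q * q = 0)%Z -> d = 0%Z.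
Proof.
  remember (Z.to_nat (Z.abs d)) as n eqn:Hn.
  assert (Hdn : (Z.abs d <= Z.of_nat n)%Z) by lia; clear Hn.
  revert d q Hdn; induction n as [|n IH]; intros d q Hdn Hdq; [lia|].
  destruct (Z.Even_or_Odd d) as [[a ->] | [a ->]], (Z.Even_or_Odd q) as [[b ->] | [b ->]];
    try (exfalso; lia).
  enough (a = 0%Z) by lia.
  apply (IH a b); lia.
Qed.

Lemma tau_irrational (d q : Z) : IZR d = IZR q * tau -> d = 0%Z.
Proof.
  intros Hd; apply (golden_norm_eq0 d q), eq_IZR.
  rewrite !minus_IZR, !mult_IZR, Hd.
  replace (IZR q * tau * (IZR q * tau)) with (IZR q * IZR q * (tau * tau)) by ring.
  rewrite tau_sq; ring.
Qed.

(* With [L = d - q tau], the nonzero integer [d ^ 2 - d q - q ^ 2] equals [L * (2 d - q - L)]. *)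
Lemma golden_approx_ge (d q : Z) :
  d <> 0%Z -> 0 < IZR d - IZR q * tau < tau -> 1 <= 6 * Rabs (IZR d) * (IZR d - IZR q * tau).
Proof.
  intros Hd0 HL; pose proof tau_bounds; pose proof tau_sq.
  set (L := IZR d - IZR q * tau) in *.
  assert (Hnorm : 1 <= Rabs (IZR (d * d - d * q - q * q))).
  { rewrite <- abs_IZR; apply IZR_le.
    enough ((d * d - d * q - q * q)%Z <> 0%Z) by lia.
    intros Hn; exact (Hd0 (golden_norm_eq0 d q Hn)). }
  replace (IZR (d * d - d * q - q * q)) with (L * (2 * IZR d - IZR q - L)) in Hnorm
    by (rewrite !minus_IZR, !mult_IZR; unfold L;
        replace (IZR q * IZR q) with (IZR q * IZR q * (tau * tau - tau)) by (rewrite tau_sq; ring);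
        ring).
  rewrite Rabs_mult, (Rabs_pos_eq L) in Hnorm by lra.
  assert (Hd1 : 1 <= Rabs (IZR d)) by (rewrite <- abs_IZR; apply IZR_le; lia).
  assert (Hq : Rabs (IZR q) <= Rabs (IZR d) + 1).
  { assert (IZR q * tau = IZR d - L) by (unfold L; ring).
    destruct (Rcase_abs (IZR q)), (Rcase_abs (IZR d));
      rewrite ?(Rabs_left (IZR q)), ?(Rabs_right (IZR q)),
              ?(Rabs_left (IZR d)), ?(Rabs_right (IZR d)) by lra; nra. }
  assert (Rabs (2 * IZR d - IZR q - L) <= 6 * Rabs (IZR d)).
  { unfold Rminus at 1; eapply Rle_trans; [apply Rabs_triang|].
    rewrite Rabs_Ropp, (Rabs_pos_eq L) by lra.
    unfold Rminus; eapply Rle_trans; [apply Rplus_le_compat_r, Rabs_triang|].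
    rewrite Rabs_Ropp, Rabs_mult, (Rabs_pos_eq 2) by lra; lra. }
  nra.
Qed.

Lemma modtau_spec x : 0 <= modtau x < tau /\ exists z : Z, x = modtau x + tau * IZR z.
Proof.
  pose proof tau_bounds; unfold modtau, rfloor.
  destruct (base_Int_part (x / tau)) as [B1 B2].
  assert (x = tau * (x / tau)) by (field; lra).
  split; [split; nra | exists (Int_part (x / tau)); ring].
Qed.

Lemma modtau_unique x y (z : Z) : 0 <= y < tau -> x = y + tau * IZR z -> modtau x = y.
Proof.
  pose proof tau_bounds; intros Hy ->; unfold modtau, rfloor.
  replace ((y + tau * IZR z) / tau) with (y / tau + IZR z) by (field; lra).
  rewrite <- (Int_part_spec (y / tau + IZR z) z); [ring|].
  assert (0 <= y / tau < 1).
  { split; [apply Rdiv_le_0_compat; lra|].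
    apply (Rmult_lt_reg_r tau); [lra|]; unfold Rdiv; rewrite Rmult_assoc, Rinv_l; lra. }
  lra.
Qed.

Lemma modtau_plus x y :
  modtau (x + y) = modtau x + modtau y \/ modtau (x + y) = modtau x + modtau y - tau.
Proof.
  destruct (modtau_spec x) as [Rx [zx Ex]], (modtau_spec y) as [Ry [zy Ey]].
  destruct (Rlt_le_dec (modtau x + modtau y) tau).
  - left; apply (modtau_unique _ _ (zx + zy)); [lra|].
    rewrite plus_IZR; lra.
  - right; apply (modtau_unique _ _ (zx + zy + 1)); [lra|].
    rewrite !plus_IZR; lra.
Qed.

Lemma modtau_int_pos (d : Z) : d <> 0%Z -> 0 < modtau (IZR d).
Proof.
  intros Hd; destruct (modtau_spec (IZR d)) as [[R0 _] [z Ez]].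
  destruct R0 as [|R0]; [assumption|].
  exfalso; apply Hd, (tau_irrational d z); lra.
Qed.

Lemma modtau_sub_int (m n : Z) :
  modtau (IZR (m - n)) = modtau (IZR m) - modtau (IZR n) \/
  modtau (IZR (m - n)) = modtau (IZR m) - modtau (IZR n) + tau.
Proof.
  destruct (modtau_plus (IZR n) (IZR (m - n))) as [E | E];
    rewrite <- plus_IZR, Zplus_minus in E; lra.
Qed.

Lemma modtau_int_inj (m n : Z) : modtau (IZR m) = modtau (IZR n) -> m = n.
Proof.
  intros E; destruct (Z.eq_dec (m - n) 0) as [H0 | H0]; [lia|].
  pose proof (modtau_int_pos _ H0); pose proof (modtau_spec (IZR (m - n))).
  destruct (modtau_sub_int m n); lra.
Qed.

Lemma golden_even_powers (i : nat) :
  exists f p : Z, (IZR f - IZR p * tau) * (tau * tau) ^ i = 1 /\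
                  0 <= IZR p /\ IZR f <= (tau * tau) ^ i.
Proof.
  pose proof tau_bounds; pose proof tau_sq.
  induction i as [|i [f [p [Hfp [Hp Hf]]]]].
  { exists 1%Z, 0%Z; simpl; lra. }
  exists (2 * f + p)%Z, (f + p)%Z; rewrite !plus_IZR, mult_IZR; simpl.
  assert (P : 0 < (tau * tau) ^ i) by (apply pow_lt; nra).
  assert (Hpf : IZR p * tau < IZR f).
  { enough (0 < IZR f - IZR p * tau) by lra.
    apply (Rmult_lt_reg_r ((tau * tau) ^ i)); lra. }
  assert (Hf0 : 0 <= IZR f) by nra.
  split; [|split; [lra|]].
  - assert (Hinv : (2 - tau) * (tau * tau) = 1) by (rewrite tau_sq; lra).
    assert (Hstep : 2 * IZR f + IZR p - (IZR f + IZR p) * tau = (IZR f - IZR p * tau) * (2 - tau)).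
    { assert (IZR p * (tau * tau) = IZR p * (tau + 1)) by (rewrite tau_sq; ring); lra. }
    rewrite Hstep.
    replace ((IZR f - IZR p * tau) * (2 - tau) * (tau * tau * (tau * tau) ^ i))
      with ((IZR f - IZR p * tau) * (tau * tau) ^ i * ((2 - tau) * (tau * tau))) by ring.
    rewrite Hfp, Hinv; ring.
  - assert (IZR p <= (tau - 1) * IZR f) by nra.
    nra.
Qed.

Lemma pow_bracket x L : 1 < x -> 0 < L <= x -> exists i : nat, 1 < L * x ^ i <= x.
Proof.
  intros Hx HL.
  destruct (Pow_x_infinity x ltac:(rewrite Rabs_pos_eq; lra) (2 / L)) as [N HN].
  specialize (HN N (le_n N)); rewrite Rabs_pos_eq in HN by (apply pow_le; lra).
  assert (Hbig : 1 < L * x ^ N).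
  { apply Rge_le in HN; apply (Rmult_le_compat_l L) in HN; [|lra].
    replace (L * (2 / L)) with 2 in HN by (field; lra); lra. }
  clear HN; induction N as [|N IH].
  - exists 0%nat; simpl in *; lra.
  - destruct (Rlt_le_dec 1 (L * x ^ N)) as [H1 | H1]; [exact (IH H1)|].
    exists (S N); split; [exact Hbig|].
    simpl; replace (L * (x * x ^ N)) with (x * (L * x ^ N)) by ring.
    pose proof (Rmult_le_compat_l x _ _ ltac:(lra) H1); lra.
Qed.

(* Witness: the pair [(f, p)] of [golden_even_powers] at the first [i] with
   [tau ^ (- 2 i) < modtau d]. *)
Lemma small_int_below_modtau (d : Z) :
  d <> 0%Z -> exists f : Z, 0 <= IZR f <= 18 * Rabs (IZR d) /\
                          0 < modtau (IZR f) < modtau (IZR d).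
Proof.
  intros Hd; pose proof tau_bounds; pose proof tau_sq.
  set (L := modtau (IZR d)).
  assert (HL : 0 < L < tau) by (split; [apply modtau_int_pos, Hd | apply modtau_spec]).
  destruct (modtau_spec (IZR d)) as [_ [q Eq]]; fold L in Eq.
  assert (HdL : 1 <= 6 * Rabs (IZR d) * L).
  { replace L with (IZR d - IZR q * tau) by lra; apply golden_approx_ge; [exact Hd | lra]. }
  destruct (pow_bracket (tau * tau) L ltac:(nra) ltac:(nra)) as [i [Hi1 Hi2]].
  destruct (golden_even_powers i) as [f [p [Hfp [Hp Hf]]]].
  assert (P : 0 < (tau * tau) ^ i) by (apply pow_lt; nra).
  set (e := IZR f - IZR p * tau) in *.
  assert (He : 0 < e < L).
  { split; apply (Rmult_lt_reg_r ((tau * tau) ^ i)); nra. }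
  assert (Hf0 : 0 <= IZR f).
  { pose proof (Rmult_le_pos (IZR p) tau Hp ltac:(lra)); unfold e in He; lra. }
  exists f; split.
  - split; [exact Hf0|].
    apply (Rmult_le_reg_l L); [lra|].
    apply (Rle_trans _ (tau * tau)); nra.
  - rewrite (modtau_unique (IZR f) e p); [lra | lra | unfold e; ring].
Qed.

Lemma a_term_bounds n phi k : 0 <= a_term n phi k <= weight phi k.
Proof.
  unfold a_term, weight; pose proof (w_pos (IZR k - phi)); destruct Rlt_dec; lra.
Qed.

Lemma ex_Zseries_a_term n phi : ex_Zseries (a_term n phi).
Proof. apply (ex_Zseries_le _ (weight phi)); [apply a_term_bounds | apply Zseries_weight_le1]. Qed.

Section ArcGaps.

Variables (phi : R) (n1 n2 : Z).
Hypothesis r12 : modtau (IZR n1) < modtau (IZR n2).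

Let D (k : Z) : R := a_term n2 phi k - a_term n1 phi k.

Lemma a_term_sub_spec k :
  (modtau (IZR n1) <= modtau (IZR k) < modtau (IZR n2) -> D k = weight phi k) /\
  (modtau (IZR k) < modtau (IZR n1) \/ modtau (IZR n2) <= modtau (IZR k) -> D k = 0) /\
  0 <= D k <= weight phi k.
Proof.
  unfold D, a_term, weight; pose proof (w_pos (IZR k - phi)).
  destruct (Rlt_dec (modtau (IZR k)) (modtau (IZR n2))),
           (Rlt_dec (modtau (IZR k)) (modtau (IZR n1))); repeat split; intros; lra.
Qed.

Lemma ex_Zseries_a_term_sub : ex_Zseries D.
Proof.
  apply (ex_Zseries_le _ (weight phi)); [apply a_term_sub_spec | apply Zseries_weight_le1].
Qed.

Lemma Zseries_a_term_sub : Zseries D = a_coef n2 phi - a_coef n1 phi.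
Proof. apply Zseries_minus; apply ex_Zseries_a_term. Qed.

Lemma a_coef_gap_inner k :
  modtau (IZR n1) < modtau (IZR k) < modtau (IZR n2) ->
  arc_len n1 phi + weight phi k <= a_coef n2 phi - a_coef n1 phi.
Proof.
  intros Hk; rewrite <- Zseries_a_term_sub; change (arc_len n1 phi) with (weight phi n1).
  destruct (a_term_sub_spec n1) as [Dn1 _], (a_term_sub_spec k) as [Dk _].
  rewrite <- (Dn1 ltac:(lra)), <- (Dk ltac:(lra)).
  apply Zseries_ge_two; [apply a_term_sub_spec | apply ex_Zseries_a_term_sub | intros ->; lra].
Qed.

Lemma a_coef_gap_outer k :
  modtau (IZR k) < modtau (IZR n1) \/ modtau (IZR n2) < modtau (IZR k) ->
  a_coef n2 phi - a_coef n1 phi + arc_len n2 phi + weight phi k <= 1.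
Proof.
  intros Hk; rewrite <- Zseries_a_term_sub; change (arc_len n2 phi) with (weight phi n2).
  destruct (Zseries_weight_le1 phi) as [Hw Sw].
  set (E k := weight phi k - D k).
  assert (HE : forall j, 0 <= E j <= weight phi j)
    by (intro j; unfold E; pose proof (a_term_sub_spec j); lra).
  assert (ZE : ex_Zseries E) by (apply (ex_Zseries_le _ (weight phi)); assumption).
  assert (SE : Zseries E = Zseries (weight phi) - Zseries D)
    by (apply Zseries_minus; [exact Hw | apply ex_Zseries_a_term_sub]).
  assert (En2 : E n2 = weight phi n2).
  { unfold E; destruct (a_term_sub_spec n2) as [_ [-> _]]; [ring | lra]. }
  assert (Ek : E k = weight phi k).
  { unfold E; destruct (a_term_sub_spec k) as [_ [-> _]]; [ring | lra]. }
  pose proof (Zseries_ge_two E n2 k (fun j => proj1 (HE j)) ZE ltac:(intros ->; lra)); lra.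
Qed.

End ArcGaps.

Section NearbyIntegers.

Variables n1 n2 : Z.
Hypothesis r12 : modtau (IZR n1) < modtau (IZR n2).

Lemma exists_int_inside :
  exists k : Z, modtau (IZR n1) < modtau (IZR k) < modtau (IZR n2) /\
                Rabs (IZR k - IZR n1) <= 18 * Rabs (IZR n2 - IZR n1).
Proof.
  assert (Hd : (n2 - n1)%Z <> 0%Z) by (intros Hd; replace n2 with n1 in r12 by lia; lra).
  assert (Hr : modtau (IZR (n2 - n1)) = modtau (IZR n2) - modtau (IZR n1))
    by (pose proof (modtau_spec (IZR (n2 - n1))); destruct (modtau_sub_int n2 n1); lra).
  destruct (small_int_below_modtau (n2 - n1) Hd) as [f [Hf Hrf]].
  exists (n1 + f)%Z; split.
  - destruct (modtau_spec (IZR (n1 + f))) as [Hk _]; pose proof (modtau_spec (IZR n2)).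
    destruct (modtau_plus (IZR n1) (IZR f)) as [E | E]; rewrite <- plus_IZR in E; lra.
  - rewrite plus_IZR, <- minus_IZR, Rabs_pos_eq; lra.
Qed.

Lemma exists_int_outside :
  exists k : Z, (modtau (IZR k) < modtau (IZR n1) \/ modtau (IZR n2) < modtau (IZR k)) /\
                Rabs (IZR k - IZR n1) <= 19 * Rabs (IZR n2 - IZR n1).
Proof.
  assert (Hd : (n1 - n2)%Z <> 0%Z) by (intros Hd; replace n2 with n1 in r12 by lia; lra).
  assert (Hr : modtau (IZR (n1 - n2)) = modtau (IZR n1) - modtau (IZR n2) + tau)
    by (pose proof (modtau_spec (IZR (n1 - n2))); destruct (modtau_sub_int n1 n2); lra).
  destruct (small_int_below_modtau (n1 - n2) Hd) as [f [Hf Hrf]].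
  exists (n2 + f)%Z; split.
  - destruct (modtau_plus (IZR n2) (IZR f)) as [E | E]; rewrite <- plus_IZR in E; lra.
  - rewrite minus_IZR, Rabs_minus_sym in Hf.
    replace (IZR (n2 + f) - IZR n1) with ((IZR n2 - IZR n1) + IZR f) by (rewrite plus_IZR; ring).
    pose proof (Rabs_triang (IZR n2 - IZR n1) (IZR f)).
    rewrite (Rabs_pos_eq (IZR f)) in * by lra; lra.
Qed.

End NearbyIntegers.

Lemma arc_gap_ordered phi n1 n2 :
  modtau (IZR n1) < modtau (IZR n2) ->
  exists G, sep_const * Rmin (arc_len n1 phi) (arc_len n2 phi) <= G /\
            G <= a_coef n2 phi - a_coef n1 phi - arc_len n1 phi /\
            a_coef n2 phi + arc_len n2 phi - a_coef n1 phi <= 1 - G.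
Proof.
  intros r12.
  assert (Hnear : forall k : Z, Rabs (IZR k - IZR n1) <= 19 * Rabs (IZR n2 - IZR n1) ->
            sep_const * Rmin (arc_len n1 phi) (arc_len n2 phi) <= weight phi k).
  { intros k Hk; apply w_min_compare.
    replace (IZR k - phi - (IZR n1 - phi)) with (IZR k - IZR n1) by ring.
    replace (IZR n2 - phi - (IZR n1 - phi)) with (IZR n2 - IZR n1) by ring; exact Hk. }
  destruct (exists_int_inside n1 n2 r12) as [k0 [Hk0 Dk0]].
  destruct (exists_int_outside n1 n2 r12) as [k1 [Hk1 Dk1]].
  pose proof (a_coef_gap_inner phi n1 n2 r12 k0 Hk0).
  pose proof (a_coef_gap_outer phi n1 n2 r12 k1 Hk1).
  pose proof (Rabs_pos (IZR n2 - IZR n1)).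
  exists (Rmin (weight phi k0) (weight phi k1)); repeat split.
  - apply Rmin_glb; apply Hnear; lra.
  - pose proof (Rmin_l (weight phi k0) (weight phi k1)); lra.
  - pose proof (Rmin_r (weight phi k0) (weight phi k1)); lra.
Qed.

(* [in_I n phi] is convertible to [on_arc (a_coef n phi) (arc_len n phi)]. *)
Definition on_arc (a l x : R) : Prop :=
  exists t : R, a < t < a + l /\ exists m : Z, x = t + IZR m.

Lemma circ_dist_ge x y (m : Z) G :
  0 < G -> G <= x - y - IZR m <= 1 - G -> G <= circ_dist x y.
Proof.
  intros HG Hxy; unfold circ_dist, Defs.frac_part, rfloor.
  rewrite <- (Int_part_spec (x - y) m) by lra.
  apply Rmin_glb; lra.
Qed.

Lemma circ_dist_arcs_ge a1 l1 a2 l2 G x y :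
  0 < G -> G <= a2 - a1 - l1 -> a2 + l2 - a1 <= 1 - G ->
  on_arc a1 l1 x -> on_arc a2 l2 y -> G <= circ_dist x y /\ G <= circ_dist y x.
Proof.
  intros HG Hl Hr [t1 [T1 [m1 ->]]] [t2 [T2 [m2 ->]]]; split.
  - apply (circ_dist_ge _ _ (m1 - m2 - 1)); [exact HG|].
    rewrite !minus_IZR; lra.
  - apply (circ_dist_ge _ _ (m2 - m1)); [exact HG|].
    rewrite minus_IZR; lra.
Qed.

Lemma arc_gap phi n1 n2 :
  n1 <> n2 ->
  exists G, sep_const * Rmin (arc_len n1 phi) (arc_len n2 phi) <= G /\
            forall x y, in_I n1 phi x -> in_I n2 phi y -> G <= circ_dist x y.
Proof.
  intros Hn.
  assert (Hmin : forall n n', 0 < sep_const * Rmin (arc_len n phi) (arc_len n' phi))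
    by (intros; apply Rmult_lt_0_compat; [apply sep_const_pos | apply Rmin_glb_lt; apply w_pos]).
  destruct (Rtotal_order (modtau (IZR n1)) (modtau (IZR n2))) as [H12 | [Heq | H21]].
  - destruct (arc_gap_ordered phi n1 n2 H12) as [G [HG [Hl Hr]]].
    exists G; split; [exact HG|]; intros x y Hx Hy.
    refine (proj1 (circ_dist_arcs_ge _ _ _ _ G x y _ Hl Hr Hx Hy)).
    pose proof (Hmin n1 n2); lra.
  - exfalso; exact (Hn (modtau_int_inj _ _ Heq)).
  - destruct (arc_gap_ordered phi n2 n1 H21) as [G [HG [Hl Hr]]].
    exists G; rewrite Rmin_comm; split; [exact HG|]; intros x y Hx Hy.
    refine (proj2 (circ_dist_arcs_ge _ _ _ _ G y x _ Hl Hr Hy Hx)).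
    pose proof (Hmin n2 n1); lra.
Qed.

Lemma set_dist_ge (A B : R -> Prop) G :
  (forall x y, A x -> B y -> G <= circ_dist x y) -> Rbar_le G (set_dist A B).
Proof.
  intros HAB; unfold set_dist.
  apply (Glb_Rbar_correct (fun d => exists x y, A x /\ B y /\ d = circ_dist x y)).
  intros d [x [y [Hx [Hy ->]]]]; exact (HAB x y Hx Hy).
Qed.

Theorem corollary16 :
  exists C : R, 0 < C /\
    forall (phi : R) (n1 n2 : Z), n1 <> n2 ->
      Rbar_lt (Finite (C * Rmin (arc_len n1 phi) (arc_len n2 phi)))
              (set_dist (in_I n1 phi) (in_I n2 phi)).
Proof.
  exists (sep_const / 2); split; [pose proof sep_const_pos; lra|].
  intros phi n1 n2 Hn.
  destruct (arc_gap phi n1 n2 Hn) as [G [HG Hsep]].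
  assert (Hpos : 0 < Rmin (arc_len n1 phi) (arc_len n2 phi)) by (apply Rmin_glb_lt; apply w_pos).
  assert (Hlt : sep_const / 2 * Rmin (arc_len n1 phi) (arc_len n2 phi) < G)
    by (pose proof sep_const_pos; nra).
  apply (Rbar_lt_le_trans _ (Finite G)); [exact Hlt|].
  exact (set_dist_ge _ _ G Hsep).
Qed.
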